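(* Fix $\epsilon\in(0,1/5)$ and an integer $d\geq3$. There is a constant $C=C(d,\epsilon)>0$ such that for every natural number $n\geq1$ and every $t\in\mathbb{N}\cap[1,2\epsilon\log_d n]$, $$\mathcal{G}_{n,d}\big(\{G\in\mathbb{G}_{n,d}: |\mathfrak{C}_t(G)|\geq n^{1-2\epsilon}\}\big)\leq C\,n^{5\epsilon-1}.$$
   Context: Graphs are undirected with no loops or parallel edges. $\mathbb{G}_{n,d}$ is the finite set of $d$-regular graphs on vertex set $\{1,\dots,n\}$ and $\mathcal{G}_{n,d}$ the uniform probability measure on it (the statement concerns those $n$ for which $\mathbb{G}_{n,d}$ is nonempty). A cycle in $G$ is a set $C=\{x_1,\dots,x_k\}$ of distinct vertices such that $\{x_1,x_2\},\dots,\{x_{k-1},x_k\},\{x_k,x_1\}$ are edges; $\mathfrak{C}_t(G)$ is the set of cycles $C$ with $|C|<t$. *)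

From HB Require Import structures.
From mathcomp Require Import all_boot all_order all_algebra.
From mathcomp Require Import all_classical all_reals all_analysis.
Set Implicit Arguments. Unset Strict Implicit. Unset Printing Implicit Defensive.
Import Order.TTheory GRing.Theory Num.Theory.

(* Vertex set {1,...,n} is represented by 'I_n = {0,...,n-1}.
   A graph is its edge set: a set of 2-element subsets of 'I_n
   (undirected, no loops, no parallel edges). *)
Definition graph (n : nat) := {set {set 'I_n}}.

Definition simple_graph n (E : graph n) : bool :=
  [forall e in E, #|e| == 2].

Definition deg n (E : graph n) (v : 'I_n) : nat := #|[set e in E | v \in e]|.

Definition regular n (d : nat) (E : graph n) : bool :=
  [forall v, deg E v == d].

Definition regular_graphs (n d : nat) : {set graph n} :=
  [set E : graph n | simple_graph E && regular d E].

Definition adj n (E : graph n) : rel 'I_n := fun x y => [set x; y] \in E.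

Definition is_cycle n (E : graph n) (C : {set 'I_n}) : Prop :=
  exists s : seq 'I_n,
    [/\ uniq s, 3 <= size s, [set x in s] = C & cycle (adj E) s].

Definition short_cycles n (E : graph n) (t : nat) : {set {set 'I_n}} :=
  [set C : {set 'I_n} | `[< is_cycle E C >] && (#|C| < t)].

From HB Require Import structures.
From mathcomp Require Import all_boot all_order all_algebra.
From mathcomp Require Import all_classical all_reals all_analysis.
From mathcomp Require Import lra zify.
(* Re-imported so that finset's setUC, subsetP, ... shadow those of classical_sets. *)
From mathcomp Require Import fintype finset.
Import Order.TTheory GRing.Theory Num.Theory.
Set Implicit Arguments. Unset Strict Implicit. Unset Printing Implicit Defensive.

(* Let H be a set of edges containing uv.  In a d-regular graph E
   containing H, all but O(d^2 + |H|) of the n d ordered edges (x, y) of E can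
   be switched with uv (replace uv and xy by ux and vy), and each d-regular
   graph containing H minus uv arises from at most d^2 such switchings, since
   x and y are neighbours of u and v in the new graph and determine E.  So
   each edge of H costs a factor d^2 / (n d - O(d^2 + |H|)) <= (d + 1) / n,
   and a given k-cycle occurs with probability at most ((d + 1) / n)^k.
   Summing over the n^k vertex sequences, the expected number of cycles of
   length < t is at most (d + 1)^t <= n^(3 eps) when t <= 2 eps log_d n, and
   Markov's inequality gives the bound n^(3 eps) / n^(1 - 2 eps). *)

Lemma sum_nat_bool_card (T : finType) (P : pred T) :
  \sum_x (P x : nat) = #|[set x | P x]|.
Proof. by rewrite -sum1dep_card [RHS]big_mkcond; apply: eq_bigr => x _; case: (P x). Qed.

Lemma sum_nat_mem_card (T : finType) (A : {set T}) : \sum_x (x \in A : nat) = #|A|.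
Proof. by rewrite sum_nat_bool_card cardsE. Qed.

Lemma geom_sum_le a t : 1 < a -> \sum_(k < t) a ^ k <= a ^ t.
Proof.
move=> a_gt1; elim: t => [|t IHt]; first by rewrite big_ord0.
rewrite big_ord_recr /= expnS (leq_trans (leq_add IHt (leqnn _))) //.
by rewrite addnn -mul2n leq_mul2r a_gt1 orbT.
Qed.

Lemma set2_inj (T : finType) (u x y : T) : [set u; x] = [set u; y] -> x = y.
Proof.
move=> eq_ux_uy; have : x \in [set u; y] by rewrite -eq_ux_uy !inE eqxx orbT.
rewrite !inE => /orP [/eqP xu|/eqP //]; subst x.
have : y \in [set u; u] by rewrite eq_ux_uy !inE eqxx orbT.
by rewrite !inE orbb => /eqP.
Qed.

Lemma adjC n (E : graph n) : symmetric (adj E).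
Proof. by move=> x y; rewrite /adj setUC. Qed.

Lemma deg_sum n (E : graph n) w : deg E w = \sum_(f in E) (w \in f : nat).
Proof.
rewrite /deg -sum1_card big_mkcond [RHS]big_mkcond /=.
by apply: eq_bigr => f _; rewrite inE; case: (f \in E); case: (w \in f).
Qed.

Section SimpleGraph.
Variables (n : nat) (E : graph n).
Hypothesis simpleE : simple_graph E.

Lemma card_edge f : f \in E -> #|f| = 2.
Proof. by move: simpleE => /forall_inP h /h /eqP. Qed.

Lemma sum_adj x : \sum_y (adj E x y : nat) = deg E x.
Proof.
rewrite sum_nat_bool_card /deg.
have -> : [set f in E | x \in f] = (fun y => [set x; y]) @: [set y | adj E x y].
  apply/setP => f; rewrite inE; apply/andP/imsetP => [[fE xf]|[y]].
    have /eqP/cards2P [a [b [_ fab]]] := card_edge fE.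
    move: xf; rewrite fab !inE => /orP [/eqP xa | /eqP xb].
    + by exists b; rewrite ?inE /adj xa -?fab.
    + by exists a; rewrite ?inE /adj xb setUC -?fab.
  by rewrite inE => Exy ->; rewrite !inE eqxx.
by rewrite card_in_imset // => y z _ _ /set2_inj.
Qed.

Lemma sum_adj_pairs : \sum_x \sum_y (adj E x y : nat) = 2 * #|E|.
Proof.
under eq_bigr do rewrite sum_adj deg_sum.
rewrite exchange_big /= mulnC -sum_nat_const; apply: eq_bigr => f fE.
by rewrite sum_nat_mem_card card_edge.
Qed.

End SimpleGraph.

Section RegularGraph.
Variables (n d : nat) (E : graph n).
Hypotheses (simpleE : simple_graph E) (regularE : regular d E).

Lemma deg_regular w : deg E w = d.
Proof. by move: regularE => /forallP/(_ w)/eqP. Qed.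

Lemma sum_adj_regular x : \sum_y (adj E x y : nat) = d.
Proof. by rewrite sum_adj ?deg_regular. Qed.

Lemma sum_adj_pairs_regular : \sum_x \sum_y (adj E x y : nat) = n * d.
Proof.
by under eq_bigr do rewrite sum_adj_regular; rewrite sum_nat_const card_ord.
Qed.

Lemma sum_adj_from z : \sum_x \sum_y ((x == z) * adj E x y) = d.
Proof.
under eq_bigr do rewrite -big_distrr /= sum_adj_regular.
by rewrite (bigD1 z) //= eqxx mul1n big1 ?addn0 // => x /negbTE ->.
Qed.

Lemma sum_adj_to z : \sum_x \sum_y ((y == z) * adj E x y) = d.
Proof.
rewrite exchange_big -(sum_adj_from z).
by apply: eq_bigr => a _; apply: eq_bigr => b _; rewrite adjC.
Qed.

Lemma sum_adj_prod x y : \sum_a \sum_b (adj E x a * adj E y b) = d * d.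
Proof. by rewrite -big_distrlr /= !sum_adj_regular. Qed.

Lemma sum_paths2_from z : \sum_x \sum_y (adj E z x * adj E x y) = d * d.
Proof.
under eq_bigr do rewrite -big_distrr /= sum_adj_regular.
by rewrite -big_distrl /= sum_adj_regular.
Qed.

Lemma sum_paths2_to z : \sum_x \sum_y (adj E z y * adj E x y) = d * d.
Proof.
rewrite exchange_big -(sum_paths2_from z).
by apply: eq_bigr => a _; apply: eq_bigr => b _; rewrite (adjC _ b).
Qed.

End RegularGraph.

Lemma mem_set2_cross (T : finType) (w a b c e : T) :
  a != b -> a != c -> a != e -> b != c -> b != e -> c != e ->
  (w \in [set a; c]) + (w \in [set b; e]) = (w \in [set a; b]) + (w \in [set c; e]).
Proof.
move=> ab ac ae bc be ce; rewrite !inE.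
have [->|_] := eqVneq w a; first by rewrite (negbTE ab) (negbTE ac) (negbTE ae).
have [->|_] := eqVneq w b; first by rewrite (negbTE bc) (negbTE be).
have [->|_] := eqVneq w c; first by rewrite (negbTE ce).
by case: (w == e).
Qed.

Lemma sum_pred1_le1 (T : finType) (A : {pred T}) (z : T) :
  \sum_(x in A) (x == z : nat) <= 1.
Proof.
rewrite big_mkcond (bigD1 z) //= eqxx big1 ?addn0; first by case: (z \in A).
by move=> x /negbTE ->; case: (x \in A).
Qed.

Section Switching.
Variables (n d : nat).

Definition regular_supergraphs (H : graph n) : {set graph n} :=
  [set E in regular_graphs n d | H \subset E].

Lemma regular_supergraphsP (H E : graph n) :
  reflect [/\ simple_graph E, regular d E & H \subset E] (E \in regular_supergraphs H).
Proof. by rewrite !inE; apply: (iffP idP) => [/andP [/andP [-> ->] ->]|[-> -> ->]]. Qed.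

Lemma card_regular_supergraphs_le (H : graph n) :
  #|regular_supergraphs H| <= #|regular_graphs n d|.
Proof. by apply: subset_leq_card; apply/subsetP => E; rewrite inE => /andP []. Qed.

Variables (H : graph n) (u v : 'I_n).
Hypotheses (neq_uv : u != v) (uvH : [set u; v] \in H).

Definition switchable (E : graph n) x y :=
  [&& adj E x y, x != u, x != v, y != u, y != v,
      ~~ adj E u x, ~~ adj E v y & ~~ adj H x y].

Definition switch (E : graph n) x y : graph n :=
  [set u; x] |: ([set v; y] |: ((E :\ [set u; v]) :\ [set x; y])).

Definition unswitch (E : graph n) x y : graph n :=
  [set u; v] |: ([set x; y] |: ((E :\ [set u; x]) :\ [set v; y])).

Section SwitchOne.
Variables (E : graph n) (x y : 'I_n).
Hypotheses (EH : E \in regular_supergraphs H) (xy_switchable : switchable E x y).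

Lemma switch_regular_supergraph : switch E x y \in regular_supergraphs (H :\ [set u; v]).
Proof.
case/regular_supergraphsP: EH => sE rE HE.
move: xy_switchable; rewrite /switchable /adj.
case/and4P=> xyE xu xv /and5P [yu yv uxE vyE xyH].
have uvE : [set u; v] \in E by apply: (subsetP HE).
have xy : x != y by have := card_edge sE xyE; rewrite cards2; case: (x != y).
have ux_vy : [set u; x] != [set v; y].
  apply/eqP => eq_ux_vy; have : u \in [set v; y] by rewrite -eq_ux_vy !inE eqxx.
  by rewrite !inE (negbTE neq_uv) eq_sym (negbTE yu).
apply/regular_supergraphsP; split.
- apply/forall_inP => f; rewrite !inE.
  case/orP=> [/eqP ->|/orP [/eqP ->|/andP [_ /andP [_ fE]]]].
  + by rewrite cards2 [u == _]eq_sym xu.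
  + by rewrite cards2 [v == _]eq_sym yv.
  + by rewrite (card_edge sE fE).
- apply/forallP => w; apply/eqP; rewrite -(deg_regular rE w) !deg_sum.
  rewrite [in RHS](big_setD1 _ uvE) [in RHS](big_setD1 [set x; y]) /=; last first.
    by rewrite !inE xyE andbT; apply: contraNneq xyH => ->.
  rewrite big_setU1 /=; last by rewrite !inE negb_or ux_vy /= !negb_and uxE !orbT.
  rewrite big_setU1 /=; last by rewrite !inE (negbTE vyE) !andbF.
  by rewrite !addnA (@mem_set2_cross _ w u v x y) // eq_sym.
- apply/subsetP => f; rewrite !inE => /andP [fuv fH].
  have fxy : f != [set x; y] by apply: contraNneq xyH => <-.
  by rewrite fuv fxy (subsetP HE) ?orbT.
Qed.

Lemma switchK : unswitch (switch E x y) x y = E.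
Proof.
case/regular_supergraphsP: EH => _ _ HE.
move: xy_switchable; rewrite /switchable /adj.
case/and4P=> xyE _ _ /and5P [_ _ uxE vyE _].
apply/setP => f; rewrite !inE.
have [->|_] /= := eqVneq f [set u; v]; first by rewrite (subsetP HE).
have [->|_] //= := eqVneq f [set x; y].
have [->|_] /= := eqVneq f [set v; y]; first by rewrite (negbTE vyE).
by have [->|_] /= := eqVneq f [set u; x]; rewrite ?(negbTE uxE).
Qed.

End SwitchOne.

Lemma sum_switchable_lb E : E \in regular_supergraphs H ->
  n * d <= \sum_x \sum_y (switchable E x y : nat) + (4 * d + 2 * (d * d) + 2 * #|H|).
Proof.
case/regular_supergraphsP=> sE rE HE.
have sH : simple_graph H by apply/forall_inP => f /(subsetP HE)/(card_edge sE) ->.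
(* an adjacent pair that cannot be switched has one of seven defects *)
have : \sum_x \sum_y (adj E x y : nat) <= \sum_x \sum_y (switchable E x y
    + (x == u) * adj E x y + (x == v) * adj E x y
    + (y == u) * adj E x y + (y == v) * adj E x y
    + adj E u x * adj E x y + adj E v y * adj E x y + adj H x y).
  apply: leq_sum => x _; apply: leq_sum => y _.
  rewrite /switchable; case: (adj E x y) => //=.
  by case: (x == u); case: (x == v); case: (y == u); case: (y == v);
     case: (adj E u x); case: (adj E v y); case: (adj H x y).
rewrite (sum_adj_pairs_regular sE rE).
under [X in _ <= X -> _]eq_bigr do rewrite !big_split /=.
rewrite !big_split /= !(sum_adj_from sE rE) !(sum_adj_to sE rE).
rewrite (sum_paths2_from sE rE) (sum_paths2_to sE rE) (sum_adj_pairs sH).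
by move/leq_trans; apply; rewrite -!addnA leq_add2l; set h := #|H|; lia.
Qed.

Lemma sum_switch_preimage E' x y :
  \sum_(E in regular_supergraphs H) (switchable E x y && (switch E x y == E') : nat)
    <= adj E' u x * adj E' v y.
Proof.
have [adj_ux_vy|not_adj] := boolP (adj E' u x && adj E' v y); last first.
  rewrite big1 // => E _; have [sw|] := eqVneq (switch E x y) E'; last by rewrite andbF.
  by case/negP: not_adj; rewrite -sw /adj !inE !eqxx orbT.
rewrite mulnb adj_ux_vy.
apply: leq_trans (sum_pred1_le1 (mem (regular_supergraphs H)) (unswitch E' x y)).
apply: leq_sum => E EH; case: (boolP (switchable E x y)) => //= sxy.
by case: eqP => //= <-; rewrite switchK ?eqxx.
Qed.

Lemma sum_switchable_ub :
  \sum_(E in regular_supergraphs H) \sum_x \sum_y (switchable E x y : nat)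
    <= #|regular_supergraphs (H :\ [set u; v])| * (d * d).
Proof.
set S' := regular_supergraphs (H :\ _).
have split_by_image E : E \in regular_supergraphs H ->
    \sum_x \sum_y (switchable E x y : nat) =
    \sum_(E' in S') \sum_x \sum_y (switchable E x y && (switch E x y == E') : nat).
  move=> EH; rewrite [RHS]exchange_big; apply: eq_bigr => x _.
  rewrite [RHS]exchange_big; apply: eq_bigr => y _.
  case: (boolP (switchable E x y)) => [sxy|_] /=; last by rewrite big1.
  rewrite (bigD1 (switch E x y)) /=; last exact: switch_regular_supergraph.
  by rewrite eqxx big1 // => E' /andP [_ /negbTE]; rewrite eq_sym => ->.
rewrite (eq_bigr _ split_by_image) exchange_big /= -sum_nat_const.
apply: leq_sum => E' /regular_supergraphsP [sE' rE' _].
rewrite -(sum_adj_prod sE' rE' u v) exchange_big /=; apply: leq_sum => x _.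
by rewrite exchange_big /=; apply: leq_sum => y _; apply: sum_switch_preimage.
Qed.

Lemma card_regular_supergraphs_switch :
  #|regular_supergraphs H| * (n * d) <=
  #|regular_supergraphs (H :\ [set u; v])| * (d * d)
    + #|regular_supergraphs H| * (4 * d + 2 * (d * d) + 2 * #|H|).
Proof.
rewrite -[_ * (n * d)]sum_nat_const -[X in _ + X]sum_nat_const.
apply: (@leq_trans (\sum_(E in regular_supergraphs H)
    (\sum_x \sum_y (switchable E x y : nat) + (4 * d + 2 * (d * d) + 2 * #|H|)))).
  by apply: leq_sum => E; apply: sum_switchable_lb.
by rewrite big_split /= leq_add2r; apply: sum_switchable_ub.
Qed.

End Switching.

Lemma card_regular_supergraphs_pow n d K (H : graph n) : #|H| <= K ->
  #|regular_supergraphs d H| * (n * d - (4 * d + 2 * (d * d) + 2 * K)) ^ #|H|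
    <= #|regular_graphs n d| * (d * d) ^ #|H|.
Proof.
set q := n * d - _; move cardH: #|H| => m.
elim: m H cardH => [|m IHm] H cardH le_mK.
  by rewrite !expn0 !muln1 card_regular_supergraphs_le.
have [->|/set0Pn [E /regular_supergraphsP [sE _ HE]]] := eqVneq (regular_supergraphs d H) set0.
  by rewrite cards0.
have [e eH] : exists e, e \in H by apply/set0Pn; rewrite -card_gt0 cardH.
have /eqP/cards2P [u [v [neq_uv def_e]]] := card_edge sE (subsetP HE e eH).
subst e; have switch_ineq := card_regular_supergraphs_switch d neq_uv eH.
have cardHe : #|H :\ [set u; v]| = m by move: cardH; rewrite (cardsD1 [set u; v]) eH => -[].
have {}IHm := IHm _ cardHe (ltnW le_mK).
set a := #|regular_supergraphs d H| in switch_ineq *.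
set b := #|regular_supergraphs d (H :\ _)| in switch_ineq IHm.
have aq_le : a * q <= b * (d * d).
  rewrite /q mulnBr leq_subLR (leq_trans switch_ineq) // addnC leq_add2r.
  by rewrite leq_mul2l cardH leq_add2l leq_mul2l le_mK !orbT.
rewrite expnS mulnA (leq_trans (leq_mul aq_le (leqnn _))) //.
by rewrite expnS; nia.
Qed.

Fixpoint path_edges n (x : 'I_n) (p : seq 'I_n) : graph n :=
  if p is y :: p' then [set x; y] |: path_edges y p' else set0.

Definition cycle_edges n (s : seq 'I_n) : graph n :=
  if s is x :: p then [set last x p; x] |: path_edges x p else set0.

Lemma path_edges_sub n (E : graph n) x p : path (adj E) x p -> path_edges x p \subset E.
Proof.
elim: p x => [|y p IHp] x /=; first by rewrite sub0set.
by case/andP => Exy /IHp sub; rewrite subUset sub1set sub andbT.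
Qed.

Lemma cycle_edges_sub n (E : graph n) s : cycle (adj E) s -> cycle_edges s \subset E.
Proof.
case: s => [|x p] /=; first by rewrite sub0set.
by rewrite rcons_path => /andP [/path_edges_sub sub Ex]; rewrite subUset sub1set sub andbT.
Qed.

Lemma mem_path_edges n (x : 'I_n) p f w : f \in path_edges x p -> w \in f -> w \in x :: p.
Proof.
elim: p x f => [|y p IHp] x f /=; first by rewrite inE.
rewrite in_setU1 => /orP [/eqP -> | /IHp mem_w /mem_w]; last by rewrite !inE => ->; rewrite orbT.
by rewrite !inE => /orP [->|->]; rewrite ?orbT.
Qed.

Lemma card_path_edges n (x : 'I_n) p : uniq (x :: p) -> #|path_edges x p| = size p.
Proof.
elim: p x => [|y p IHp] x /=; first by rewrite cards0.
case/andP => x_yp /andP [y_p uniq_p].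
rewrite cardsU1 IHp /=; last by rewrite y_p.
suff -> : [set x; y] \notin path_edges y p by [].
by apply/negP => /mem_path_edges/(_ (setU11 _ _)); apply/negP.
Qed.

Lemma card_cycle_edges n (s : seq 'I_n) : uniq s -> 2 < size s -> #|cycle_edges s| = size s.
Proof.
case: s => [|x [|y [|z r]]] // uniq_s _.
rewrite /= cardsU1 -/(path_edges x [:: y, z & r]) (card_path_edges uniq_s).
suff -> : [set last z r; x] \notin path_edges x [:: y, z & r] by [].
move: uniq_s => /= /andP [x_yzr /andP [y_zr _]].
rewrite /= -/(path_edges y (z :: r)) in_setU1 negb_or; apply/andP; split.
  by rewrite setUC; apply: contra y_zr => /eqP /set2_inj <-; rewrite mem_last.
by apply/negP => /mem_path_edges/(_ (setU1r _ (set11 x))); apply/negP.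
Qed.

Definition cycle_tuples n (E : graph n) k : {set k.-tuple 'I_n} :=
  [set s : k.-tuple 'I_n | [&& uniq s, 2 < k & cycle (adj E) s]].

Lemma card_short_cycles_le n (E : graph n) t :
  #|short_cycles E t| <= \sum_(k < t) #|cycle_tuples E k|.
Proof.
have split_size C : C \in short_cycles E t -> 1 = \sum_(k < t) (#|C| == k : nat).
  rewrite inE => /andP [_ lt_Ct]; rewrite (bigD1 (Ordinal lt_Ct)) //= eqxx big1 // => k.
  by move=> neq_k; case: eqP => // eq_Ck; case/eqP: neq_k; apply: val_inj.
rewrite -sum1_card (eq_bigr _ split_size) exchange_big /=; apply: leq_sum => k _.
rewrite -big_mkcondr /= sum1dep_card.
apply: leq_trans (leq_imset_card (fun s : k.-tuple 'I_n => [set x in s]) (cycle_tuples E k)).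
apply: subset_leq_card; apply/subsetP => C; rewrite !inE.
case/andP=> /andP [/asboolP [s [uniq_s s3 def_C cyc]] _] /eqP card_C.
have size_s : size s == k by rewrite -card_C -def_C cardsE (card_uniqP uniq_s).
apply/imsetP; exists (Tuple size_s); last by rewrite -def_C.
by rewrite inE /= uniq_s cyc -(eqP size_s) s3.
Qed.

Lemma card_regular_with_cycle n d (s : seq 'I_n) : uniq s -> 2 < size s ->
  (d + 1) * (4 * d + 2 * (d * d) + 2 * size s) <= n * d ->
  n ^ size s * #|[set E in regular_graphs n d | cycle (adj E) s]|
    <= #|regular_graphs n d| * (d + 1) ^ size s.
Proof.
move=> uniq_s s3 room; set k := size s in s3 room *.
set q := n * d - (4 * d + 2 * (d * d) + 2 * k).
have k_gt0 : 0 < k by apply: leq_trans s3.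
have q_gt0 : 0 < q by rewrite subn_gt0; nia.
have room_q : n * (d * d) <= (d + 1) * q by rewrite mulnBr; nia.
have := card_regular_supergraphs_pow d (leqnn #|cycle_edges s|).
rewrite card_cycle_edges // -/k -/q => pow.
have sub_sup : #|[set E in regular_graphs n d | cycle (adj E) s]|
    <= #|regular_supergraphs d (cycle_edges s)|.
  by apply: subset_leq_card; apply/subsetP => E; rewrite !inE => /andP [-> /cycle_edges_sub].
rewrite -(@leq_pmul2r (q ^ k)) ?expn_gt0 ?q_gt0 //.
apply: (@leq_trans (n ^ k * (#|regular_graphs n d| * (d * d) ^ k))).
  by rewrite -mulnA leq_mul2l (leq_trans (leq_mul sub_sup (leqnn _))) ?orbT.
by rewrite mulnCA -mulnA -!expnMn leq_mul2l leq_exp2r ?room_q ?orbT.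
Qed.

Lemma sum_card_short_cycles n d t : 0 < n -> 0 < d ->
  (d + 1) * (4 * d + 2 * (d * d) + 2 * t) <= n * d ->
  \sum_(E in regular_graphs n d) #|short_cycles E t| <= #|regular_graphs n d| * (d + 1) ^ t.
Proof.
move=> n_gt0 d_gt0 room.
apply: (@leq_trans (\sum_(E in regular_graphs n d) \sum_(k < t) #|cycle_tuples E k|)).
  by apply: leq_sum => E _; apply: card_short_cycles_le.
rewrite exchange_big /=.
apply: (@leq_trans (\sum_(k < t) #|regular_graphs n d| * (d + 1) ^ k)); last first.
  by rewrite -big_distrr leq_mul2l geom_sum_le ?orbT // addn1 ltnS.
apply: leq_sum => k _; rewrite -(@leq_pmul2l (n ^ k)) ?expn_gt0 ?n_gt0 //.
under eq_bigr do rewrite -sum_nat_mem_card.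
rewrite exchange_big big_distrr /=.
have -> : n ^ k * (#|regular_graphs n d| * (d + 1) ^ k) =
    \sum_(s : k.-tuple 'I_n) #|regular_graphs n d| * (d + 1) ^ k.
  by rewrite sum_nat_const card_tuple card_ord.
apply: leq_sum => s _.
have [/andP [uniq_s k3]|bad] := boolP (uniq s && (2 < k)); last first.
  by rewrite big1 ?muln0 // => E _; rewrite inE andbA (negbTE bad).
have mem_s E : (s \in cycle_tuples E k) = cycle (adj E) s by rewrite inE uniq_s k3.
under eq_bigr do rewrite mem_s.
rewrite -big_mkcondr sum1dep_card.
have := @card_regular_with_cycle n d s uniq_s; rewrite size_tuple => /(_ k3); apply.
by apply: leq_trans room; rewrite leq_mul2l !leq_add2l leq_mul2l (ltnW (ltn_ord k)) !orbT.
Qed.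

Lemma bernoulli_expn m t : m * t < m.+1 ^ t.
Proof.
elim: t => [|t IHt]; first by rewrite muln0 expn0.
by rewrite expnS mulnS; have := expn_gt0 m.+1 t; nia.
Qed.

Lemma switch_room n d t : 0 < d -> 8 * t <= n -> 4 * (d + 1) * (d + 2) <= n ->
  (d + 1) * (4 * d + 2 * (d * d) + 2 * t) <= n * d.
Proof. nia. Qed.

Local Open Scope ring_scope.

Lemma markov_card (R : realFieldType) (T : finType) (A : {set T}) (f : T -> nat) (p : R) :
  #|[set x in A | p <= (f x)%:R]|%:R * p <= (\sum_(x in A) f x)%:R.
Proof.
rewrite -sum1_card natr_sum mulr_suml natr_sum.
rewrite [X in X <= _]big_mkcond [X in _ <= X]big_mkcond /=; apply: ler_sum => x _.
by rewrite inE; case: (x \in A) => //=; case: ifP; rewrite ?mul1r ?mul0r.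
Qed.

Lemma exprn_le_powR (R : realType) (a x c : R) t :
  0 < a -> 0 < x -> t%:R * ln a <= c * ln x -> a ^+ t <= x `^ c.
Proof.
move=> a_gt0 x_gt0 le_ln.
by rewrite -ler_ln ?posrE ?exprn_gt0 ?powR_gt0 // lnXn // ln_powR -mulr_natl.
Qed.

Lemma succ_expn_le_powR (R : realType) (eps : R) (n d t : nat) :
  (3 <= d)%N -> (0 < n)%N -> t%:R * ln (d%:R : R) <= 2 * eps * ln (n%:R : R) ->
  (d + 1)%:R ^+ t <= (n%:R : R) `^ (3 * eps).
Proof.
move=> d_ge3 n_gt0 t_ln.
have ln_d1 : 2 * ln ((d + 1)%:R : R) <= 3 * ln (d%:R : R).
  have d1_gt0 : (0 : R) < (d + 1)%:R by rewrite ltr0n addn1.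
  have d_gt0 : (0 : R) < d%:R by rewrite ltr0n; apply: leq_trans d_ge3.
  rewrite !mulr_natl -!lnXn // ler_ln ?posrE ?exprn_gt0 // -!natrX ler_nat.
  by rewrite !expnS expn0 !muln1; nia.
apply: exprn_le_powR; [by rewrite ltr0n addn1 | by rewrite ltr0n | ].
have := ler_wpM2l (ler0n R t) ln_d1; lra.
Qed.

Lemma cycle_length_le (R : realType) (eps : R) (n d t : nat) :
  (3 <= d)%N -> (0 < n)%N -> t%:R * ln (d%:R : R) <= 2 * eps * ln (n%:R : R) ->
  eps <= 1 / 4 -> (8 * t <= n)%N.
Proof.
move=> d_ge3 n_gt0 t_ln eps_le; have [->|t_gt0] := posnP t; first by rewrite muln0.
have d_gt0 : (0 < d)%N by apply: leq_trans d_ge3.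
(* 8 t < 9 ^ t <= d ^ (2 t) <= n ^ (4 eps) <= n *)
apply: (leq_trans (ltnW (bernoulli_expn 8 t))); apply: (@leq_trans ((d ^ 2) ^ t)).
  by rewrite leq_exp2r // (@leq_exp2r 3 d 2).
rewrite -(ler_nat R) natrX -(powRr1 (ler0n _ n)) natrX.
apply: exprn_le_powR; rewrite ?exprn_gt0 ?ltr0n // lnXn ?ltr0n //.
have ln_n_ge0 : 0 <= ln (n%:R : R) by rewrite ln_ge0 // ler1n.
have := ler_wpM2r ln_n_ge0 eps_le; lra.
Qed.

Lemma short_cycles_tail (R : realType) (eps : R) (n d t : nat) :
  eps < 1 / 5 -> (3 <= d)%N -> (4 * (d + 1) * (d + 2) <= n)%N ->
  (0 < #|regular_graphs n d|)%N ->
  t%:R * ln (d%:R : R) <= 2 * eps * ln (n%:R : R) ->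
  #|[set E in regular_graphs n d | (n%:R : R) `^ (1 - 2 * eps) <= (#|short_cycles E t|)%:R]|%:R
    / (#|regular_graphs n d|)%:R <= (n%:R : R) `^ (5 * eps - 1).
Proof.
move=> eps_lt d_ge3 n_large N_gt0 t_ln.
have d_gt0 : (0 < d)%N by apply: leq_trans d_ge3.
have n_gt0 : (0 < n)%N by apply: leq_trans n_large; rewrite !muln_gt0 !addn_gt0 orbT.
have t8 : (8 * t <= n)%N by apply: (cycle_length_le d_ge3 n_gt0 t_ln); lra.
set N := #|regular_graphs n d|; set p := _ `^ (1 - 2 * eps); set bad := [set E in _ | _].
have markov := markov_card (regular_graphs n d) (fun E => #|short_cycles E t|) p.
have expect := sum_card_short_cycles n_gt0 d_gt0 (switch_room d_gt0 t8 n_large).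
have bad_le : #|bad|%:R * p <= N%:R * (n%:R : R) `^ (3 * eps).
  apply: (le_trans markov); apply: (@le_trans _ _ (N * (d + 1) ^ t)%:R); first by rewrite ler_nat.
  by rewrite natrM natrX ler_wpM2l ?(succ_expn_le_powR d_ge3 n_gt0 t_ln).
have -> : 5 * eps - 1 = 3 * eps - (1 - 2 * eps) by lra.
rewrite powRB; last by apply/implyP => _; rewrite gt_eqF ?ltr0n.
by rewrite ler_pdivrMr ?ltr0n // mulrAC ler_pdivlMr ?powR_gt0 ?ltr0n // [X in _ <= X]mulrC.
Qed.

Theorem lemma4p1 (R : realType) (eps : R) (d : nat) :
  0 < eps -> eps < 1 / 5 -> (3 <= d)%N ->
  exists C : R, 0 < C /\
    forall n t : nat, (1 <= n)%N -> (0 < #|regular_graphs n d|)%N ->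
      (1 <= t)%N -> (t%:R <= 2 * eps * (ln (n%:R : R) / ln (d%:R : R))) ->
      (#|[set E in regular_graphs n d |
            (n%:R : R) `^ (1 - 2 * eps) <= (#|short_cycles E t|)%:R]|%:R
         / (#|regular_graphs n d|)%:R : R)
      <= C * (n%:R : R) `^ (5 * eps - 1).
Proof.
move=> eps_gt0 eps_lt d_ge3.
pose n0 := (4 * (d + 1) * (d + 2))%N.
have n0_ge1 : (1 : R) <= n0%:R by rewrite ler1n !muln_gt0 !addn_gt0 orbT.
exists n0%:R; split => [|n t n_ge1 N_gt0 _ t_le]; first exact: lt_le_trans ltr01 n0_ge1.
have [n_small|n_large] := ltnP n n0; last first.
  apply: le_trans (short_cycles_tail eps_lt d_ge3 n_large N_gt0 _) _.
    by rewrite -ler_pdivlMr ?ln_gt0 ?ltr1n ?(leq_trans _ d_ge3) // -(mulrA (2 * eps)).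
  by rewrite ler_peMl ?powR_ge0.
apply: (@le_trans _ _ 1).
  rewrite ler_pdivrMr ?ltr0n // mul1r ler_nat; apply: subset_leq_card.
  by apply/subsetP => E; rewrite inE => /andP [].
apply: (@le_trans _ _ (n0%:R * (n%:R : R) `^ (-1))).
  by rewrite powR_inv1 ?ler0n // ler_pdivlMr ?ltr0n // mul1r ler_nat ltnW.
by rewrite ler_wpM2l ?ler0n // ler_powR ?ler1n //; lra.
Qed.
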